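(* Let $(\Omega,F,\mathbf P)$ be a non-trivial probability space and let $\psi\colon[1,\infty)\to(0,\infty)$ be a finite, continuous, strictly increasing function with $\psi(1)=\inf_{p\ge1}\psi(p)=1$. Let $S\subset[1,\infty)$ be a Borel set with $1\in S$. For $p\ge1$ put $p^+[S](p)=\inf\{t\in S:\ t\ge p\}$ and $$Z[\psi,S]=\sup_{p\ge1}\frac{\psi(p^+[S](p))}{\psi(p)}.$$ Suppose $Z[\psi,S]<\infty$. Then for every measurable $f\colon\Omega\to\mathbb R$, $$\|f\|G^{(S)}\psi\le\|f\|G\psi\le Z[\psi,S]\,\|f\|G^{(S)}\psi,$$ where $$\|f\|G\psi=\sup_{p\ge1}\frac{|f|_p}{\psi(p)},\qquad \|f\|G^{(S)}\psi=\sup_{p\in S}\frac{|f|_p}{\psi(p)}.$$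
   Context: For a random variable $f$ on $(\Omega,F,\mathbf P)$, $|f|_p=\left(\mathbf E|f|^p\right)^{1/p}$ for $1\le p<\infty$ (possibly $+\infty$). The quantity $\|f\|G\psi$ is the Grand Lebesgue Space norm with generating function $\psi$, and $\|f\|G^{(S)}\psi$ is the restricted Grand Lebesgue Space norm. *)

From mathcomp Require Import all_boot all_order all_algebra.
From mathcomp Require Import all_classical all_reals all_analysis.
Set Implicit Arguments. Unset Strict Implicit. Unset Printing Implicit Defensive.
Import Order.TTheory GRing.Theory Num.Theory.
Local Open Scope classical_set_scope.
Local Open Scope ring_scope.

Definition Lp_norm d (T : measurableType d) (R : realType)
  (P : probability T R) (p : R) (f : T -> R) : \bar R :=
  Lnorm P p%:E (EFin \o f).

Definition GLS_norm d (T : measurableType d) (R : realType)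
  (P : probability T R) (psi : R -> R) (f : T -> R) : \bar R :=
  ereal_sup [set (Lp_norm P p f * (psi p)^-1%:E)%E | p in `[1, +oo[%classic].

Definition GLS_norm_S d (T : measurableType d) (R : realType)
  (P : probability T R) (psi : R -> R) (S : set R) (f : T -> R) : \bar R :=
  ereal_sup [set (Lp_norm P p f * (psi p)^-1%:E)%E | p in S].

Definition pplus (R : realType) (S : set R) (p : R) : R :=
  inf [set t | S t /\ p <= t].

(* the ratio psi(p^+[S](p))/psi(p); by convention +oo when {t in S : t >= p}
   is empty (p^+ = +oo, psi(+oo) = +oo) *)
Definition Zratio (R : realType) (psi : R -> R) (S : set R) (p : R) : \bar R :=
  if pselect (exists t, S t /\ p <= t)
  then (psi (pplus S p) / psi p)%:E else +oo%E.

Definition Zconst (R : realType) (psi : R -> R) (S : set R) : \bar R :=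
  ereal_sup [set Zratio psi S p | p in `[1, +oo[%classic].

(** The lower bound holds because the sup defining the restricted norm runs
    over a subset of [[1, +oo[].  For the upper bound fix [p >= 1] and let
    [q = p^+[S](p)].  For [t] in [S] with [p <= t], Lyapunov's inequality gives
    [|f|_p <= |f|_t <= N psi(t)], where [N] is the restricted norm; letting [t]
    decrease to [q] along [S], continuity of [psi] yields [|f|_p <= N psi(q)],
    and [psi(q) <= Z psi(p)] by definition of [Z]. *)
From mathcomp Require Import all_boot all_order all_algebra.
From mathcomp Require Import all_classical all_reals all_analysis.
Import Order.TTheory GRing.Theory Num.Theory numFieldNormedType.Exports.
Local Open Scope classical_set_scope.
Local Open Scope ring_scope.

(* Hoelder's inequality for |f|^p against the constant 1, with exponents
   t/p and t/(t - p). *)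
Lemma le_Lp_norm {d} {T : measurableType d} {R : realType} (P : probability T R)
    {f : T -> R} {p t : R} :
  measurable_fun [set: T] f -> 0 < p -> p <= t ->
  (Lp_norm P p f <= Lp_norm P t f)%E.
Proof.
move=> mf p0; rewrite le_eqVlt => /predU1P[<-//|pt].
have t0 : 0 < t by apply: lt_trans pt.
pose r := t / p; pose r' := t / (t - p).
have r0 : 0 < r by rewrite divr_gt0.
have r'0 : 0 < r' by rewrite divr_gt0 // subr_gt0.
have rr' : r^-1 + r'^-1 = 1.
  by rewrite /r /r' !invf_div -mulrDl addrC subrK divff // gt_eqF.
have mfp : measurable_fun [set: T] (fun x => `|f x| `^ p).
  apply: (measurableT_comp (f := @powR R ^~ p)) => //.
  exact: measurableT_comp.
have := hoelder P mfp (measurable_cst (1 : R)) r0 r'0 rr'.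
have PT : ((P : {measure set T -> \bar R}) [set: T] = 1)%E.
  exact: probability_setT.
rewrite Lnorm1 Lnorm_cst1 PT poweR1r mule1 /Lp_norm unlock /=.
under eq_integral do rewrite /= mulr1 ger0_norm ?powR_ge0 //.
under [in X in (_ <= X `^ _)%E -> _]eq_integral do
  rewrite /= ger0_norm ?powR_ge0 // -powRrM mulrCA divff ?mulr1 ?gt_eqF //.
set Ip := (\int[P]_x _)%E; set It := (\int[P]_x _)%E => IpIt.
have Ip0 : (0 <= Ip)%E by apply: integral_ge0 => x _; rewrite lee_fin powR_ge0.
have := @gt0_ler_poweR _ p^-1 _ Ip (It `^ r^-1)%E.
rewrite !in_itv /= Ip0 poweR_ge0 !leey invr_ge0 ltW // => /(_ isT isT isT IpIt).
by rewrite -poweRrM /r invf_div mulrAC divff ?mul1r // gt_eqF.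
Qed.

Lemma le_at_inf {R : realType} (g : R -> R) (D E : set R) (x : \bar R) :
  {within D, continuous g} -> E `<=` D -> D (inf E) ->
  E !=set0 -> has_lbound E -> (forall t, E t -> x <= (g t)%:E)%E ->
  (x <= (g (inf E))%:E)%E.
Proof.
move=> /subspace_continuousP g_cont ED DinfE En Elb xg.
apply/lee_addgt0Pr => e e0.
have := (cvgrPdist_lt _ _).1 (g_cont _ DinfE) e e0.
rewrite near_withinE => -[del del0 near_inf].
have [t Et t_lt] := inf_adherent del0 (conj En Elb).
have inf_le_t : inf E <= t by apply: ge_inf.
have dist_t : `|inf E - t| < del.
  by rewrite distrC ger0_norm ?subr_ge0 // ltrBlDl.
apply: (le_trans (xg t Et)); rewrite -EFinD lee_fin ltW // ltr_distlDr //.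
by rewrite distrC near_inf //; apply: ED.
Qed.

Lemma pplus_id {R : realType} {S : set R} {p : R} : S p -> pplus S p = p.
Proof.
move=> Sp; apply/le_anti/andP; split.
  by apply: ge_inf; [exists p => t [] | split].
by apply: lb_le_inf; [exists p | move=> t []].
Qed.

Lemma pplus_ge {R : realType} {S : set R} {p : R} :
  (exists t, S t /\ p <= t) -> p <= pplus S p.
Proof. by move=> Sp; apply: lb_le_inf => // t []. Qed.

Section Zconst.
Context {R : realType} {psi : R -> R} {S : set R}.

Lemma Zratio_id p : S p -> psi p != 0 -> Zratio psi S p = 1%E.
Proof.
move=> Sp psip0; rewrite /Zratio; case: pselect => [?|[]]; last by exists p.
by rewrite pplus_id // divff.
Qed.

Lemma Zratio_le_Zconst p : 1 <= p -> (Zratio psi S p <= Zconst psi S)%E.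
Proof.
by move=> p1; apply: ereal_sup_ubound; exists p; rewrite //= in_itv /= p1.
Qed.

Lemma Zconst_ge1 : S 1 -> psi 1 != 0 -> (1 <= Zconst psi S)%E.
Proof.
by move=> S1 psi10; rewrite -(Zratio_id 1 S1 psi10); apply: Zratio_le_Zconst.
Qed.

End Zconst.

Section restricted_norm.
Context {d : measure_display} {T : measurableType d} {R : realType}.
Context {P : probability T R} {psi : R -> R} {S : set R} {f : T -> R}.

Lemma GLS_norm_S_le_GLS_norm :
  S `<=` `[1, +oo[ -> (GLS_norm_S P psi S f <= GLS_norm P psi f)%E.
Proof. by move=> S_ge1; apply/ereal_sup_le/image_subset. Qed.

Lemma GLS_norm_S_ge0 t : S t -> 0 <= psi t -> (0 <= GLS_norm_S P psi S f)%E.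
Proof.
move=> St psit0; apply: (le_trans _ (ereal_sup_ubound _)); last by exists t.
by rewrite mule_ge0 ?Lnorm_ge0 // lee_fin invr_ge0.
Qed.

Lemma Lp_norm_le_GLS_norm_S t : S t -> 0 < psi t ->
  (Lp_norm P t f <= GLS_norm_S P psi S f * (psi t)%:E)%E.
Proof.
move=> St psit0.
have le_sup : (Lp_norm P t f * (psi t)^-1%:E <= GLS_norm_S P psi S f)%E.
  by apply: ereal_sup_ubound; exists t.
have := lee_wpmul2r (ltW (psit0 : 0 < (psi t)%:E)%E) le_sup.
by rewrite -muleA -EFinM mulVf ?mule1 // gt_eqF.
Qed.

End restricted_norm.

Section upper_bound.
Context {d : measure_display} {T : measurableType d} {R : realType}.
Context {P : probability T R} {psi : R -> R} {S : set R} {f : T -> R}.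
Hypothesis psi_gt0 : forall p, 1 <= p -> 0 < psi p.
Hypothesis psi_cont : {within [set x : R | 1 <= x], continuous psi}.
Hypothesis S_ge1 : S `<=` `[1, +oo[.
Hypothesis mf : measurable_fun [set: T] f.
Variable n : R.
Hypothesis Lp_norm_le_n : forall t, S t -> (Lp_norm P t f <= (n * psi t)%:E)%E.

Lemma Lp_norm_le_at_pplus p : 1 <= p -> (exists t, S t /\ p <= t) ->
  (Lp_norm P p f <= (n * psi (pplus S p))%:E)%E.
Proof.
move=> p1 Sp; apply: (le_at_inf (fun t => n * psi t) [set x | 1 <= x]) => //.
- by move=> x; apply: cvgM; [exact: cvg_cst | exact: psi_cont].
- by move=> t [/S_ge1]; rewrite /= in_itv /= andbT.
- by rewrite /= (le_trans p1 (pplus_ge Sp)).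
- by exists p => t [].
- move=> t [St pt].
  have p0 : 0 < p by apply: lt_le_trans p1.
  exact: le_trans (le_Lp_norm P mf p0 pt) (Lp_norm_le_n t St).
Qed.

Lemma Lp_norm_div_psi_le_Zratio p : 1 <= p -> (Zratio psi S p < +oo)%E ->
  (Lp_norm P p f * (psi p)^-1%:E <= n%:E * Zratio psi S p)%E.
Proof.
move=> p1; rewrite /Zratio; case: pselect => [Sp ?|?]; last by rewrite ltxx.
have psip_inv0 : (0 <= (psi p)^-1%:E)%E.
  by rewrite lee_fin invr_ge0 ltW ?psi_gt0.
apply: le_trans (lee_wpmul2r psip_inv0 (Lp_norm_le_at_pplus p p1 Sp)) _.
by rewrite /= -!EFinM mulrA.
Qed.

End upper_bound.

Theorem theorem1p1 (d : measure_display) (T : measurableType d) (R : realType)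
  (P : probability T R) (psi : R -> R) (S : set R) :
  (exists A : set T, measurable A /\ (0 < P A)%E /\ (P A < 1)%E) ->
  (forall p, 1 <= p -> 0 < psi p) ->
  {within [set x : R | 1 <= x], continuous psi} ->
  (forall p q, 1 <= p -> p < q -> psi p < psi q) ->
  psi 1 = 1 ->
  inf [set psi p | p in `[1, +oo[%classic] = 1 ->
  measurable S -> S `<=` `[1, +oo[%classic -> S 1 ->
  (Zconst psi S < +oo)%E ->
  forall f : T -> R, measurable_fun [set: T] f ->
    (GLS_norm_S P psi S f <= GLS_norm P psi f)%E /\
    (GLS_norm P psi f <= Zconst psi S * GLS_norm_S P psi S f)%E.
Proof.
move=> _ psi_gt0 psi_cont _ _ _ _ S_ge1 S1 Z_fin f mf.
split; first exact: GLS_norm_S_le_GLS_norm.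
have psi_S_gt0 t : S t -> 0 < psi t.
  by move=> /S_ge1; rewrite /= in_itv /= andbT; apply: psi_gt0.
have Z_ge1 : (1 <= Zconst psi S)%E.
  by apply: Zconst_ge1; rewrite ?gt_eqF ?psi_S_gt0.
have N_ge0 : (0 <= GLS_norm_S P psi S f)%E.
  exact: GLS_norm_S_ge0 S1 (ltW (psi_S_gt0 _ S1)).
have [->|N_oo] := eqVneq (GLS_norm_S P psi S f) +oo%E.
  by rewrite gt0_muley ?leey // (lt_le_trans lte01 Z_ge1).
have N_fin : GLS_norm_S P psi S f \is a fin_num by rewrite ge0_fin_numE // ltey.
have Lp_norm_le_N t :
    S t -> (Lp_norm P t f <= (fine (GLS_norm_S P psi S f) * psi t)%:E)%E.
  move=> St; rewrite EFinM fineK //.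
  by apply: Lp_norm_le_GLS_norm_S; rewrite ?psi_S_gt0.
rewrite -(fineK N_fin) muleC; apply: ge_ereal_sup => _ [p + <-].
rewrite /= in_itv /= andbT => p1.
have Zp_le : (Zratio psi S p <= Zconst psi S)%E := Zratio_le_Zconst p p1.
apply: le_trans (Lp_norm_div_psi_le_Zratio psi_gt0 psi_cont S_ge1 mf _
  Lp_norm_le_N p p1 (le_lt_trans Zp_le Z_fin)) _.
by rewrite lee_wpmul2l // lee_fin fine_ge0.
Qed.
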